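(* Let $A$ be a finite group with a normal subgroup $G$ such that $A/G$ is cyclic. Let $X,Y\in A$ have the same image in $A/G$. Suppose that $X^2$ is conjugate to $Y^2$ in $A$ and that $X^r$ is conjugate to $Y^r$ in $A$ for some odd integer $r>1$, but that $X$ is not conjugate to $Y$ in $A$. Then $4$ divides $|G|$. *)

From mathcomp Require Import all_boot all_fingroup all_solvable.

From mathcomp Require Import all_boot all_fingroup all_solvable.

(* Suppose 4 does not divide |G| and let N = O_2'(G).  A group of order twice
   an odd number has a subgroup of index 2, so |G : N| <= 2; hence G/N is
   central in A/N and, A/G being cyclic, A/N is abelian.  Conjugation is then
   trivial modulo N, so X^r ~ Y^r makes the image of Y X^-1 in G/N an element
   of odd order dividing 2: X and Y agree modulo N.  Conjugating Y we may assume
   X^2 = Y^2; then X and Y have the same 2'-part u, their 2-parts v and w lie in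
   one coset of the odd group C_N(u), and a Sylow argument in <v> C_N(u)
   conjugates v to w by an element centralising u, so X ~ Y. *)

Set Implicit Arguments.
Unset Strict Implicit.
Unset Printing Implicit Defensive.

Local Open Scope group_scope.

Section OddOrderSquares.
Variable gT : finGroupType.
Implicit Types x y : gT.

Lemma odd_order_expg2K x : odd #[x] -> (x ^+ 2) ^+ (#[x].+1)./2 = x.
Proof.
move=> ox; have even_succ : (2 * (#[x].+1)./2)%N = #[x].+1.
  by rewrite mul2n -[in RHS](odd_double_half #[x].+1) /= ox.
by rewrite -expgM even_succ expgS expg_order mulg1.
Qed.

Lemma order_expg2_odd x : odd #[x] -> #[x ^+ 2] = #[x].
Proof.
by move=> ox; rewrite orderXgcd (eqnP (_ : coprime #[x] 2)) ?divn1 // coprimen2.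
Qed.

Lemma expg2_inj_odd x y : odd #[x] -> odd #[y] -> x ^+ 2 = y ^+ 2 -> x = y.
Proof.
move=> ox oy exy; have oxy : #[x] = #[y].
  by rewrite -(order_expg2_odd ox) -(order_expg2_odd oy) exy.
by rewrite -(odd_order_expg2K ox) -(odd_order_expg2K oy) exy oxy.
Qed.

Lemma constt2'_expg2 x y : x ^+ 2 = y ^+ 2 -> x.`_2^' = y.`_2^'.
Proof.
by move=> exy; apply: expg2_inj_odd; rewrite -?consttX ?exy // odd_2'nat; apply: p_elt_constt.
Qed.

End OddOrderSquares.

Lemma p_elt_rcoset_conjg (gT : finGroupType) (p : nat) (K : {group gT}) (v w : gT) :
  p^'.-group K -> v \in 'N(K) -> p.-elt v -> p.-elt w -> w * v^-1 \in K ->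
  exists2 k, k \in K & w = v ^ k.
Proof.
move=> p'K nKv pv pw wvK.
have nKV : <[v]> \subset 'N(K) by rewrite cycle_subG.
pose H := (<[v]> <*> K)%G.
have defH : <[v]> <*> K = <[v]> * K := norm_joinEl nKV.
have sylV : p.-Sylow(H) <[v]>.
  rewrite /pHall joing_subl [p.-group _]pv /=.
  by rewrite defH indexMg (pnat_dvd (dvdn_indexg _ _) p'K).
have wH : <[w]> \subset H.
  rewrite cycle_subG -(mulgKV v w) groupM //.
    exact: subsetP (joing_subr _ _) _ wvK.
  exact: subsetP (joing_subl _ _) _ (cycle_id v).
have [c] := Sylow_subJ sylV wH pw.
rewrite /= defH cycle_subG => /mulsgP[_ k /cycleP[i ->] Kk ->].
rewrite /= conjsgM (conjGid (mem_cycle v i)) mem_conjg => /cycleP[j wkj].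
have {wkj} defw : w = v ^+ j ^ k by rewrite -wkj conjgKV.
have vjK : v ^+ j * v^-1 \in K.
  have kvK : k ^ v^-1 \in K by rewrite memJ_norm ?groupV.
  have -> : v ^+ j * v^-1 = k * (w * v^-1) * (k ^ v^-1)^-1.
    by rewrite defw !conjgE !invMg !invgK !mulgA mulgV mul1g mulgKV mulgK.
  by rewrite groupMr ?groupV // groupMl.
have : v ^+ j * v^-1 \in <[v]> :&: K by rewrite inE vjK groupM ?groupV ?mem_cycle ?cycle_id.
rewrite coprime_TIg ?(pnat_coprime pv p'K) // => /set1P/(canRL (mulgK _)).
by rewrite mul1g invgK => vj_v; exists k; rewrite // defw vj_v.
Qed.

Lemma constt_commute (gT : finGroupType) (pi rho : nat_pred) (x : gT) :
  commute x.`_pi x.`_rho.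
Proof. exact: (centsP (cycle_abelian x)) _ (cycle_constt _ _) _ (cycle_constt _ _). Qed.

Lemma mem_class_of_expg2_eq (gT : finGroupType) (A N : {group gT}) (x y : gT) :
  N <| A -> odd #|N| -> x \in A -> y \in A ->
  coset N x = coset N y -> x ^+ 2 = y ^+ 2 -> y \in x ^: A.
Proof.
move=> /andP[sNA nNA] oN Ax Ay exy e2.
set u := x.`_2^'; set v := x.`_2; set w := y.`_2.
have uy : y.`_2^' = u by rewrite /u (constt2'_expg2 e2).
have vCu : v \in 'C[u] by apply/cent1P; apply: constt_commute.
have wCu : w \in 'C[u] by rewrite -uy; apply/cent1P; apply: constt_commute.
have [Av Aw] : v \in A /\ w \in A.
  by split; apply: (subsetP _ _ (cycle_constt _ _)); rewrite cycle_subG.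
have [Nv Nw] := (subsetP nNA v Av, subsetP nNA w Aw).
have wvK : w * v^-1 \in 'C_N[u].
  rewrite inE [_ \in 'C[u]]groupM ?groupV // andbT -mem_rcoset.
  apply/rcoset_kercosetP; rewrite ?morph_constt ?(subsetP nNA) //=.
  by rewrite -/(coset N y) -/(coset N x) exy.
have p'K : (2^').-group 'C_N[u] by rewrite (pgroupS (subsetIl _ _)) // /pgroup -odd_2'nat.
have nKv : v \in 'N('C_N[u]).
  rewrite -cycle_subG normsI //; last by rewrite normsG ?cycle_subG.
  by rewrite cycle_subG.
have [k /setIP[Nk Cuk] def_w] :=
  p_elt_rcoset_conjg p'K nKv (p_elt_constt _ _) (p_elt_constt _ _) wvK.
have -> : y = x ^ k.
  rewrite -[y](consttC 2) -[x in RHS](consttC 2) conjMg uy -/v -/u def_w.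
  by rewrite /conjg -(cent1P Cuk) mulKg.
by rewrite memJ_class // (subsetP sNA).
Qed.

Lemma normal_dvdn2_sub_center (gT : finGroupType) (G H : {group gT}) :
  H <| G -> #|H| %| 2 -> H \subset 'Z(G).
Proof.
move=> nsHG H_2; rewrite subsetI normal_sub //=; apply/centsP=> z Hz a Ga.
have [-> | ntz] := eqVneq z 1; first exact/commute_sym/commute1.
have defH : H :=: [set 1; z].
  apply/eqP; rewrite eq_sym eqEcard cards2 eq_sym ntz (dvdn_leq _ H_2) // andbT.
  by apply/subsetP=> y /set2P[]->.
have : z ^ a \in H by rewrite memJ_norm // (subsetP (normal_norm nsHG)).
by rewrite defH !inE conjg_eq1 (negbTE ntz) => /eqP/conjg_fixP/commgP.
Qed.

Lemma quotient_abelian_index_dvdn2 (gT : finGroupType) (A G N : {group gT}) :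
  N <| A -> G <| A -> N \subset G -> cyclic (A / G) -> #|G : N| %| 2 ->
  abelian (A / N).
Proof.
move=> nsNA nsGA sNG cycAG iGN_2.
have nNG : G \subset 'N(N) := subset_trans (normal_sub nsGA) (normal_norm nsNA).
apply: (@cyclic_factor_abelian _ (G / N)%G).
  by apply: normal_dvdn2_sub_center; rewrite ?quotient_normal // card_quotient.
by rewrite (isog_cyclic (third_isog sNG nsNA nsGA)).
Qed.

Section AbelianQuotient.
Variables (gT : finGroupType) (A N : {group gT}).
Hypotheses (nNA : A \subset 'N(N)) (abelAN : abelian (A / N)).

Lemma coset_conjg x a : x \in A -> a \in A -> coset N (x ^ a) = coset N x.
Proof.
move=> Ax Aa; rewrite morphJ ?(subsetP nNA) // /conjg.
by rewrite (centsP abelAN _ (mem_quotient N Ax) _ (mem_quotient N Aa)) mulKg.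
Qed.

Lemma coset_class x y : x \in A -> y \in x ^: A -> coset N y = coset N x.
Proof. by move=> Ax /imsetP[a Aa ->]; apply: coset_conjg. Qed.

Lemma coset_eq_of_expg_class x y r : x \in A -> y \in A -> odd r ->
  coset N (y * x^-1) ^+ 2 = 1 -> y ^+ r \in (x ^+ r) ^: A -> coset N x = coset N y.
Proof.
move=> Ax Ay odd_r g2 yx_r.
have Ag : y * x^-1 \in A by rewrite groupM ?groupV.
set g := coset N (y * x^-1).
have def_y : coset N y = g * coset N x by rewrite -morphM ?(subsetP nNA) ?groupV ?mulgKV.
have cgx : commute g (coset N x) by apply: (centsP abelAN); apply: mem_quotient.
have gr1 : g ^+ r = 1.
  apply: (mulIg (coset N x ^+ r)); rewrite mul1g -expgMn // -def_y -!morphX ?(subsetP nNA) //.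
  by apply: coset_class yx_r; rewrite groupX.
have gr : g ^+ r = g.
  by rewrite -(odd_double_half r) odd_r expgS -muln2 mulnC expgM g2 expg1n mulg1.
by rewrite def_y -gr gr1 mul1g.
Qed.

Lemma mem_class_of_expg2_class x y : N \subset A -> odd #|N| -> x \in A -> y \in A ->
  coset N x = coset N y -> y ^+ 2 \in (x ^+ 2) ^: A -> y \in x ^: A.
Proof.
move=> sNA oddN Ax Ay exy /imsetP[a Aa e2].
have nsNA : N <| A by rewrite /normal sNA nNA.
have Aya : y ^ a^-1 \in A by rewrite groupJ ?groupV.
have : y ^ a^-1 \in x ^: A.
  apply: mem_class_of_expg2_eq nsNA oddN Ax Aya _ _; first by rewrite coset_conjg ?groupV.
  by rewrite -conjXg e2 conjgK.
by case/imsetP=> b Ab yb; rewrite -(conjgKV a y) yb -conjgM memJ_class ?groupM.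
Qed.

End AbelianQuotient.

Lemma card_porbits_actpermR (T : finGroupType) (t : T) :
  #|porbits (actperm 'R t)| = #|[set: T] : <[t]>|.
Proof.
rewrite -(card_lcosets [set: T]%G <[t]>%G); apply: eq_card => B.
rewrite /porbits /lcosets; apply/imsetP/imsetP => [] [x _ ->];
  by exists x; rewrite ?inE // (porbit_actperm 'R (in_setT t)) orbitR lcosetE.
Qed.

Lemma exists_half_subgroup (T : finGroupType) :
  2 %| #|T| -> odd (#|T| %/ 2) -> exists M : {group T}, (#|M| * 2)%N = #|T|.
Proof.
move=> even_T odd_half.
have [t _ ot] := @Cauchy _ 2 [set: T] isT (etrans (congr1 _ (cardsT T)) even_T).
pose sgn x := odd_perm (actperm ('R : {action T &-> T}) x).
have sgnM x y : sgn (x * y) = sgn x (+) sgn y by rewrite /sgn actpermM ?inE // odd_permM.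
have sgnV x : sgn x^-1 = sgn x by rewrite /sgn morphV ?inE // odd_permV.
(* Right translation by the involution t is a product of #|T| %/ 2
   disjoint transpositions. *)
have sgn_t : sgn t.
  rewrite /sgn /odd_perm card_porbits_actpermR -divgS ?subsetT // cardsT (ot : #|<[t]>| = 2).
  by rewrite odd_half; move: even_T; rewrite dvdn2 => /negbTE ->.
have M_group : group_set [set x | ~~ sgn x].
  apply/group_setP; split=> [|x y]; first by rewrite inE /sgn morph1 odd_perm1.
  by rewrite !inE sgnM => /negbTE-> /negbTE->.
exists (Group M_group); set M := [set x | ~~ sgn x].
have coM : ~: M = M :* t.
  by apply/setP=> x; rewrite mem_rcoset !inE sgnM sgnV sgn_t; case: (sgn x).
by rewrite -(cardsC M) coM card_rcoset muln2 addnn.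
Qed.

Lemma exists_index2_subgroup (gT : finGroupType) (G : {group gT}) :
  2 %| #|G| -> odd (#|G| %/ 2) -> exists2 M : {group gT}, M \subset G & #|G : M| = 2.
Proof.
have card_subg : #|subg_of G| = #|G|.
  by rewrite -cardsT -[in RHS]im_sgval card_injm ?injm_sgval.
rewrite -card_subg => even_G odd_half; have [M cardM] := exists_half_subgroup even_G odd_half.
exists (sgval @* M)%G; first exact: sgval_sub.
by rewrite -divgS ?sgval_sub // card_injm ?injm_sgval ?subsetT // -card_subg -cardM mulKn.
Qed.

Lemma pcore2'_index_dvdn2 (gT : finGroupType) (G : {group gT}) :
  ~~ (4 %| #|G|) -> #|G : 'O_(2^')(G)| %| 2.
Proof.
move=> not4G; have [oddG | evenG] := boolP (odd #|G|).
  by rewrite pcore_pgroup_id ?indexgg // /pgroup -odd_2'nat.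
have even_G : 2 %| #|G| by rewrite dvdn2.
have odd_half : odd (#|G| %/ 2).
  apply: contraR not4G; rewrite -dvdn2 => even_half.
  by rewrite -(divnK even_G) -[4]/(2 * 2)%N dvdn_pmul2r.
have [M sMG iGM] := exists_index2_subgroup even_G odd_half.
have cardM : #|M| = (#|G| %/ 2)%N by rewrite -(Lagrange sMG) iGM mulnK.
have oddM : (2^').-group M by rewrite /pgroup -odd_2'nat cardM.
have sMO : M \subset 'O_(2^')(G) by rewrite pcore_max ?index2_normal.
by rewrite -[in X in _ %| X]iGM indexgS.
Qed.

Theorem lemma6p4 (gT : finGroupType) (A G : {group gT}) (X Y : gT) (r : nat) :
  G <| A -> cyclic (A / G) ->
  X \in A -> Y \in A -> coset G X = coset G Y ->
  Y ^+ 2 \in (X ^+ 2) ^: A ->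
  odd r -> 1 < r -> Y ^+ r \in (X ^+ r) ^: A ->
  Y \notin X ^: A ->
  (4 %| #|G|)%N.
Proof.
move=> nsGA cycAG AX AY eqXY Y2 odd_r _ Yr; apply: contraR => not4G.
pose N := 'O_(2^')(G)%G.
have nsNA : N <| A := char_normal_trans (pcore_char _ _) nsGA.
have nNA := normal_norm nsNA.
have oddN : odd #|N| by rewrite odd_2'nat; apply: pcore_pgroup.
have iGN := pcore2'_index_dvdn2 not4G.
have abelAN := quotient_abelian_index_dvdn2 nsNA nsGA (pcore_sub _ _) cycAG iGN.
apply: (mem_class_of_expg2_class nNA abelAN (normal_sub nsNA) oddN AX AY _ Y2).
apply: (coset_eq_of_expg_class nNA abelAN AX AY odd_r _ Yr).
have GYX : Y * X^-1 \in G.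
  by rewrite -mem_rcoset; apply/rcoset_kercosetP; rewrite ?(subsetP (normal_norm nsGA)).
have nNG : G \subset 'N(N) := subset_trans (normal_sub nsGA) nNA.
apply/eqP; rewrite -order_dvdn (dvdn_trans (order_dvdG (mem_quotient N GYX))) //.
by rewrite /= card_quotient.
Qed.
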